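(* Let $G$ be a discrete group, $\mathbf k\subseteq{\rm Seq}(\mathbf C)$ a $\sigma$-subring with constants $\mathbf C$, $\alpha\in\mathcal C_c(G,\mathbf k)$, and $\phi$ the fundamental solution of $\sigma(s)=\alpha\star s$. Then: (a) ${\rm Sol}_c(\alpha,L^c)$ is a monogenous right $G$-module, namely ${\rm Sol}_c(\alpha,L^c)=\bigoplus_{g\in G}\langle\phi\star g\rangle$; (b) ${\rm Sol}(\alpha,L)=\prod_{g\in G}\langle\phi\star g\rangle$; (c) ${\rm Sol}_{\rm per}(\alpha,L^{\rm per})$ is a union of finite dimensional $G$-modules and admits a natural structure of $G^{\rm pro}$-module, where $G^{\rm pro}$ is the profinite completion of $G$.
   Context: ${\rm Seq}(\mathbf C)$: complex sequences indexed by $t\in\mathbf Z_{\ge0}$ with shift $\sigma(x)^{(t)}=x^{(t+1)}$. $\mathcal C_c(G,\mathbf k)$: finitely supported functions $G\to\mathbf k$. The equation $\sigma(s)=\alpha\star s$ means $s_g^{(t+1)}=\sum_{h\in G}\alpha^{(t)}_hs^{(t)}_{h^{-1}g}$ for $s\in\mathcal C(G,{\rm Seq}(\mathbf C))$; its fundamental solution $\phi$ is the solution with $\phi^{(0)}_e=1$, $\phi^{(0)}_g=0$ for $g\neq e$. $G$ acts on the right by $(s\star g)_h=s_{hg^{-1}}$, and solutions are mapped to solutions. ${\rm Sol}(\alpha,L)$ is the $\mathbf C$-space of all solutions; ${\rm Sol}_c(\alpha,L^c)$ the solutions with $s^{(t)}$ of finite support for every $t$; ${\rm Sol}_{\rm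 per}(\alpha,L^{\rm per})$ the solutions that are $H$-periodic ($s_{gh}=s_g$ for $h\in H$) for some normal subgroup $H$ of finite index. $\langle\phi\star g\rangle$ is the complex line spanned by $\phi\star g$; $\prod_{g\in G}\langle\phi\star g\rangle$ denotes the set of sums $\sum_g c_g\,\phi\star g$, $c_g\in\mathbf C$, which are finite when evaluated at any $(g,t)$. *)

From HB Require Import structures.
From mathcomp Require Import all_boot all_order all_algebra.
From mathcomp Require Import complex.
From mathcomp Require Import boolp classical_sets functions cardinality fsbigop.
From mathcomp Require Import reals.

Set Implicit Arguments.
Unset Strict Implicit.
Unset Printing Implicit Defensive.
Import Order.TTheory GRing.Theory Num.Theory.

Local Open Scope classical_set_scope.
Local Open Scope ring_scope.

Section SeqDefs.
Variable R : realType.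

Definition Seq := nat -> R[i].

Definition shift (x : Seq) : Seq := fun t => x t.+1.

Definition cseq (c : R[i]) : Seq := fun _ => c.

Definition sigma_subring_with_constants (k : set Seq) : Prop :=
  [/\ forall x y, k x -> k y -> k (fun t => x t - y t),
      forall x y, k x -> k y -> k (fun t => x t * y t),
      forall x, k x -> k (shift x),
      forall c, k (cseq c)
    & forall x, k x -> shift x = x -> exists c, x = cseq c].

Variable G : groupType.

Definition in_Cc (k : set Seq) (alpha : G -> Seq) : Prop :=
  (forall h, k (alpha h)) /\ finite_set [set h | alpha h <> cseq 0].

Definition gconv (alpha s : G -> Seq) : G -> Seq :=
  fun g t => \sum_(h \in [set: G]) alpha h t * s (h^-1 * g)%g t.

Definition is_sol (alpha s : G -> Seq) : Prop :=
  forall g t, s g t.+1 = gconv alpha s g t.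

Fixpoint fund_aux (alpha : G -> Seq) (t : nat) : G -> R[i] :=
  match t with
  | 0 => fun g => if g == 1%g then 1 else 0
  | t'.+1 => fun g =>
      \sum_(h \in [set: G]) alpha h t' * fund_aux alpha t' (h^-1 * g)%g
  end.

Definition fundsol (alpha : G -> Seq) : G -> Seq :=
  fun g t => fund_aux alpha t g.

Definition ract (s : G -> Seq) (g : G) : G -> Seq :=
  fun h => s (h * g^-1)%g.

Definition is_sol_c (alpha s : G -> Seq) : Prop :=
  is_sol alpha s /\ forall t, finite_set [set g | s g t <> 0].

Definition fi_normal (H : set G) : Prop :=
  [/\ H 1%g,
      forall x y, H x -> H y -> H (x * y^-1)%g,
      forall x g, H x -> H (g^-1 * x * g)%g
    & exists reps : seq G, forall g, exists2 r, r \in reps & H (r^-1 * g)%g].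

Definition periodic (s : G -> Seq) (H : set G) : Prop :=
  forall g h, H h -> s (g * h)%g = s g.

Definition is_sol_per (alpha s : G -> Seq) : Prop :=
  is_sol alpha s /\ exists H, fi_normal H /\ periodic s H.

Definition lincomb (phi : G -> Seq) (c : G -> R[i]) : G -> Seq :=
  fun g t => \sum_(h \in [set: G]) c h * ract phi h g t.

Definition pointwise_finite (phi : G -> Seq) (c : G -> R[i]) : Prop :=
  forall g t, finite_set [set h | c h * ract phi h g t <> 0].

Definition in_span (B : seq (G -> Seq)) (v : G -> Seq) : Prop :=
  exists a : nat -> R[i],
    v = fun g t => \sum_(i < size B) a i * nth (fun _ _ => 0) B i g t.

(** Profinite completion G^pro = lim_{N} G/N (N normal of finite index):
    an element is represented by a compatible family of representatives
    xi N in G, i.e. xi N = xi M mod M whenever N <= M. *)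
Definition is_pro (xi : set G -> G) : Prop :=
  forall N M, fi_normal N -> fi_normal M -> N `<=` M ->
    M (xi N * (xi M)^-1)%g.

Definition pro_eq (xi eta : set G -> G) : Prop :=
  forall N, fi_normal N -> N (xi N * (eta N)^-1)%g.

Definition pro_mul (xi eta : set G -> G) : set G -> G :=
  fun N => (xi N * eta N)%g.

Definition pro_one : set G -> G := fun _ => 1%g.

Definition pro_of (g : G) : set G -> G := fun _ => g.

End SeqDefs.

(* A solution of sigma(s) = alpha * s is determined by its value at t = 0, and
   since alpha has finite support so has every phi^(t).  Hence every solution
   is s = sum_g s_g^(0) (phi * g): the sum is finite at each (g, t), and it is a
   solution because the recursion defining phi commutes with this locally finite
   sum.  An H-periodic s has only finitely many
   translates s * r, one per coset of H, and they span a finite dimensional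
   G-stable space of periodic solutions.  An element xi of the profinite
   completion acts there through its component xi_H, which by compatibility of
   xi does not depend on the chosen period H. *)

From HB Require Import structures.
From mathcomp Require Import all_boot all_order all_algebra.
From mathcomp Require Import complex.
From mathcomp Require Import boolp classical_sets functions cardinality fsbigop.
From mathcomp Require Import reals finmap.

Set Implicit Arguments.
Unset Strict Implicit.
Unset Printing Implicit Defensive.
Import Order.TTheory GRing.Theory Num.Theory.

Local Open Scope classical_set_scope.
Local Open Scope ring_scope.

Lemma mulf_neq0_split (S : pzSemiRingType) (a b : S) :
  a * b <> 0 -> a <> 0 /\ b <> 0.
Proof. by move=> ab0; split=> e; apply: ab0; rewrite e ?mul0r ?mulr0. Qed.

Lemma sumr_neq0_exists (V : nmodType) (I : eqType) (r : seq I) (F : I -> V) :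
  \sum_(i <- r) F i <> 0 -> exists2 i, i \in r & F i <> 0.
Proof.
move=> sum0; apply: contrapT => noF; apply: sum0; rewrite big1_seq // => i ri.
by apply: contrapT => Fi; apply: noF; exists i.
Qed.

Lemma mem_fset_setP {T : choiceType} {A : set T} {x : T} :
  finite_set A -> reflect (A x) (x \in fset_set A).
Proof.
by move=> finA; rewrite in_fset_set //; apply: (iffP idP) => [/set_mem|/mem_set].
Qed.

Section Solutions.
Variables (R : realType) (G : groupType) (alpha : G -> Seq R).
Hypothesis finite_supp_alpha : finite_set [set h | alpha h <> cseq 0].

Local Notation phi := (fundsol alpha).
Local Notation supp_alpha := (fset_set [set h | alpha h <> cseq 0]).

Lemma gconvE s g t :
  gconv alpha s g t = \sum_(h <- supp_alpha) alpha h t * s (h^-1 * g)%g t.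
Proof.
rewrite /gconv (fsbigTE supp_alpha) // => h /(mem_fset_setP finite_supp_alpha).
by move/contrapT->; rewrite mul0r.
Qed.

Lemma is_sol_fundsol : is_sol alpha phi.
Proof. by []. Qed.

Lemma fundsolS g t :
  phi g t.+1 = \sum_(h <- supp_alpha) alpha h t * phi (h^-1 * g)%g t.
Proof. exact: gconvE. Qed.

Lemma finite_supp_fundsol t : finite_set [set g | phi g t <> 0].
Proof.
elim: t => [|t IHt].
  apply: (sub_finite_set _ (finite_set1 1%g)) => g /=.
  by rewrite /fundsol /=; case: eqP.
apply: sub_finite_set (finite_image2 (fun x y => x * y)%g finite_supp_alpha IHt).
move=> g; rewrite -[_ g]/(phi g t.+1 <> 0) fundsolS.
move=> /sumr_neq0_exists[h /(mem_fset_setP finite_supp_alpha) hA].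
move=> /mulf_neq0_split[_ phi_hg]; exists h; first exact: hA.
by exists (h^-1 * g)%g => //; rewrite mulVKg.
Qed.

Lemma is_sol_eq s1 s2 :
  is_sol alpha s1 -> is_sol alpha s2 -> (forall g, s1 g 0%N = s2 g 0%N) ->
  s1 = s2.
Proof.
move=> sol1 sol2 eq0; apply/funext => g; apply/funext => t.
elim: t g => [|t IHt] g; first exact: eq0.
by rewrite sol1 sol2 /gconv; apply: eq_fsbigr => h _; rewrite IHt.
Qed.

Lemma lincomb_fundsol0 c g : lincomb phi c g 0%N = c g.
Proof.
rewrite /lincomb (fsbigTE [fset g]%fset) ?big_seq_fset1 /ract /fundsol /=.
  by rewrite mulgV eqxx mulr1.
move=> h; rewrite inE /ract /fundsol /= divg_eq1 eq_sym => /negbTE->.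
by rewrite mulr0.
Qed.

Lemma lincomb_sumE c g t (X : {fset G}) :
  (forall h, c h * phi (g * h^-1)%g t <> 0 -> h \in X) ->
  lincomb phi c g t = \sum_(h <- X) c h * phi (g * h^-1)%g t.
Proof.
move=> suppX; rewrite /lincomb (fsbigTE X) // => h hX.
by apply: contrapT => /suppX; apply/negP.
Qed.

Lemma is_sol_lincomb c : is_sol alpha (lincomb phi c).
Proof.
move=> g t.
pose W := [set (p.2^-1 * p.1^-1 * g)%g | p in
             [set h | alpha h <> cseq 0] `*` [set x | phi x t <> 0]].
have finW : finite_set W.
  by apply: finite_image; apply: finite_setX => //; exact: finite_supp_fundsol.
have inW a h : a \in supp_alpha -> phi (a^-1 * g * h^-1)%g t <> 0 ->
    h \in fset_set W.
  move=> /(mem_fset_setP finite_supp_alpha) aA phi_ah.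
  apply/(mem_fset_setP finW); exists (a, (a^-1 * g * h^-1)%g) => //.
  by rewrite !invgM !invgK !mulgA mulgK mulgVK.
have inWS h : c h * phi (g * h^-1)%g t.+1 <> 0 -> h \in fset_set W.
  move=> /mulf_neq0_split[_]; rewrite fundsolS.
  move=> /sumr_neq0_exists[a aA /mulf_neq0_split[_]].
  by rewrite mulgA; exact: inW.
rewrite (lincomb_sumE inWS) gconvE.
under eq_bigr => h _ do rewrite fundsolS big_distrr.
rewrite exchange_big; apply: eq_big_seq => a aA.
have inWa h : c h * phi (a^-1 * g * h^-1)%g t <> 0 -> h \in fset_set W.
  by move=> /mulf_neq0_split[_]; exact: inW.
rewrite (lincomb_sumE inWa) big_distrr; apply: eq_bigr => h _ /=.
by rewrite mulgA mulrCA.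
Qed.

Lemma is_solE s : is_sol alpha s -> s = lincomb phi (fun g => s g 0%N).
Proof.
move=> sol; apply: is_sol_eq => // [|g]; first exact: is_sol_lincomb.
by rewrite lincomb_fundsol0.
Qed.

Lemma pointwise_finite_fundsol c : pointwise_finite phi c.
Proof.
move=> g t; apply: sub_finite_set (finite_image (fun p => p^-1 * g)%g
                                     (finite_supp_fundsol t)).
move=> h /mulf_neq0_split[_ phi_gh]; exists (g * h^-1)%g => //.
by rewrite invgM invgK mulgVK.
Qed.

Lemma finite_supp_lincomb c t :
  finite_set [set g | c g <> 0] -> finite_set [set g | lincomb phi c g t <> 0].
Proof.
move=> finc; apply: sub_finite_set (finite_image2 (fun x y => x * y)%g
                                      (finite_supp_fundsol t) finc).
move=> g; rewrite /= (lincomb_sumE (X := fset_set [set g | c g <> 0])).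
  move=> /sumr_neq0_exists[h /(mem_fset_setP finc) ch /mulf_neq0_split[_]].
  by exists (g * h^-1)%g => //; exists h => //; rewrite mulgVK.
by move=> h /mulf_neq0_split[ch _]; apply/(mem_fset_setP finc).
Qed.

Lemma is_sol_sum n (a : nat -> R[i]) (F : nat -> G -> Seq R) :
  (forall i : 'I_n, is_sol alpha (F i)) ->
  is_sol alpha (fun g t => \sum_(i < n) a i * F i g t).
Proof.
move=> solF g t; rewrite gconvE.
under eq_bigr => i _ do rewrite solF gconvE big_distrr.
under [RHS]eq_bigr => h _ do rewrite big_distrr.
by rewrite exchange_big; apply: eq_bigr => h _; apply: eq_bigr => i _; exact: mulrCA.
Qed.

End Solutions.

Lemma ract1 (R : realType) (G : groupType) (s : G -> Seq R) : ract s 1%g = s.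
Proof. by apply/funext => x; rewrite /ract invg1 mulg1. Qed.

Lemma ract_ract (R : realType) (G : groupType) (s : G -> Seq R) a b :
  ract (ract s a) b = ract s (a * b)%g.
Proof. by apply/funext => x; rewrite /ract invgM mulgA. Qed.

Lemma is_sol_ract (R : realType) (G : groupType) (alpha s : G -> Seq R) g :
  is_sol alpha s -> is_sol alpha (ract s g).
Proof.
by move=> sol x t; rewrite /ract sol /gconv; apply: eq_fsbigr => h _; rewrite mulgA.
Qed.

Lemma finite_supp_ract (R : realType) (G : groupType) (s : G -> Seq R) g t :
  finite_set [set x | s x t <> 0] -> finite_set [set x | ract s g x t <> 0].
Proof.
move=> fins; apply: sub_finite_set (finite_image (fun x => x * g)%g fins).
by move=> x sx; exists (x * g^-1)%g => //; rewrite mulgVK.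
Qed.

Section FiniteIndexNormal.
Variables (G : groupType) (H : set G).
Hypothesis fiH : fi_normal H.

Lemma fi_normalV x : H x -> H x^-1%g.
Proof. by case: fiH => H1 Hdiv _ _ Hx; have := Hdiv _ _ H1 Hx; rewrite mul1g. Qed.

Lemma fi_normalM x y : H x -> H y -> H (x * y)%g.
Proof.
by case: fiH => _ Hdiv _ _ Hx Hy; have := Hdiv _ _ Hx (fi_normalV Hy); rewrite invgK.
Qed.

Lemma fi_normal_lcoset_trans x y z :
  H (x^-1 * y)%g -> H (x^-1 * z)%g -> H (y^-1 * z)%g.
Proof.
move=> Hxy Hxz; have := fi_normalM (fi_normalV Hxy) Hxz.
by rewrite invgM invgK mulgA mulgK.
Qed.

End FiniteIndexNormal.

Lemma fi_normalI (G : groupType) (H1 H2 : set G) :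
  fi_normal H1 -> fi_normal H2 -> fi_normal (H1 `&` H2).
Proof.
move=> fi1 fi2; have [H1_1 div1 conj1 [reps1 rep1]] := fi1.
have [H2_1 div2 conj2 [reps2 rep2]] := fi2.
split=> [|x y [? ?] [? ?]|x g [? ?]|]; do ?by split; auto.
pose meets (p : G * G) y := H1 (p.1^-1 * y)%g /\ H2 (p.2^-1 * y)%g.
(* One representative of each nonempty intersection of an H1-coset with an
   H2-coset. *)
have /choice[pick pickP] :
    forall p, exists y, forall x, meets p x -> meets p y.
  move=> p; have [[y py]|none] := pselect (exists y, meets p y); first by exists y.
  by exists 1%g => x px; case: none; exists x.
exists [seq pick (x, y) | x <- reps1, y <- reps2] => g.
have [x xr Hxg] := rep1 g; have [y yr Hyg] := rep2 g.
exists (pick (x, y)); first exact: (allpairs_f (fun x y => pick (x, y))).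
have [Hx Hy] := pickP (x, y) g (conj Hxg Hyg).
by split; apply: fi_normal_lcoset_trans; eassumption.
Qed.

Section Periodic.
Variables (R : realType) (G : groupType).
Implicit Types (s : G -> Seq R) (H : set G).

Definition is_periodic s := exists H, fi_normal H /\ periodic s H.

Lemma periodicS s H1 H2 : H1 `<=` H2 -> periodic s H2 -> periodic s H1.
Proof. by move=> sub12 per g h /sub12; exact: per. Qed.

Lemma ract_eq_mod s H a b :
  fi_normal H -> periodic s H -> H (a * b^-1)%g -> ract s a = ract s b.
Proof.
move=> fiH per Hab; apply/funext => x; rewrite /ract.
have -> : (x * a^-1 = x * b^-1 * (a * b^-1)^-1)%g.
  by rewrite invgM invgK !mulgA mulgVK.
by rewrite per //; exact: fi_normalV.
Qed.

Lemma periodic_ract s H g :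
  fi_normal H -> periodic s H -> periodic (ract s g) H.
Proof.
move=> [_ _ conjH _] per x h Hh; rewrite /ract.
have -> : (x * h * g^-1 = x * g^-1 * (g^-1^-1 * h * g^-1))%g.
  by rewrite invgK !mulgA mulgVK.
by rewrite per //; exact: conjH.
Qed.

Lemma periodic_sum n (a : nat -> R[i]) (F : nat -> G -> Seq R) H :
  (forall i : 'I_n, periodic (F i) H) ->
  periodic (fun g t => \sum_(i < n) a i * F i g t) H.
Proof.
by move=> perF g h Hh; apply/funext => t; apply: eq_bigr => i _; rewrite perF.
Qed.

End Periodic.

Lemma in_span_nth (R : realType) (G : groupType) (B : seq (G -> Seq R)) j :
  (j < size B)%N -> in_span B (nth (fun _ _ => 0) B j).
Proof.
move=> jB; exists (fun i => (i == j)%:R); apply/funext => g; apply/funext => t.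
rewrite (bigD1 (Ordinal jB)) //= eqxx mul1r big1 ?addr0 // => i /negbTE ij.
by rewrite -val_eqE /= in ij; rewrite ij mul0r.
Qed.

Lemma is_sol_perP (R : realType) (G : groupType) (alpha s : G -> Seq R) :
  finite_set [set h | alpha h <> cseq 0] ->
  is_sol_per alpha s <->
     exists B : seq (G -> Seq R),
       [/\ in_span B s,
           (forall v, in_span B v -> is_sol_per alpha v)
         & (forall (i : 'I_(size B)) g,
              in_span B (ract (nth (fun _ _ => 0) B i) g))].
Proof.
move=> finA; split=> [[sol [H [fiH per]]]|[B [inB solB _]]]; last exact: solB.
have [_ _ conjH [reps repP]] := fiH.
pose B := [seq ract s r | r <- reps].
have nthB (i : 'I_(size B)) : nth (fun _ _ => 0) B i = ract s (nth 1%g reps i).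
  by rewrite (nth_map 1%g) // -(size_map (ract s)).
have ract_in_span a : in_span B (ract s a).
  have [r rreps Hra] := repP a.
  have -> : ract s a = ract s r.
    by apply: (ract_eq_mod fiH per); have := conjH _ r^-1%g Hra; rewrite invgK mulVKg.
  have -> : ract s r = nth (fun _ _ => 0) B (index r reps).
    by rewrite (nth_map 1%g) ?index_mem ?nth_index.
  by apply: in_span_nth; rewrite size_map index_mem.
exists B; split=> [|v [a ->]|i g]; first by rewrite -[s]ract1.
- split; first by apply: is_sol_sum => // i; rewrite nthB; exact: is_sol_ract.
  exists H; split=> //; apply: periodic_sum => i.
  by rewrite nthB; exact: periodic_ract.
- by rewrite nthB ract_ract.
Qed.

Section ProfiniteAction.
Variables (R : realType) (G : groupType).
Implicit Types (s : G -> Seq R) (xi eta : set G -> G).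

(* [xi] acts through its component at a period of [s]; non-periodic [s] are
   left fixed, a junk value never used. *)
Definition proact xi s : G -> Seq R :=
  if pselect (is_periodic s) is left per then ract s (xi (projT1 (cid per)))
  else s.

Lemma proact_chosen s : is_periodic s ->
  exists H0, [/\ fi_normal H0, periodic s H0 & forall xi, proact xi s = ract s (xi H0)].
Proof.
by rewrite /proact; case: pselect => // per _; case: (cid per) => H0 [] /=; exists H0.
Qed.

Lemma proact_ract xi s H :
  is_pro xi -> fi_normal H -> periodic s H -> proact xi s = ract s (xi H).
Proof.
move=> pro fiH per.
have [H0 [fiH0 per0 ->]] := proact_chosen (ex_intro _ H (conj fiH per)).
have fiI := fi_normalI fiH0 fiH.
rewrite -(ract_eq_mod fiH0 per0 (pro _ _ fiI fiH0 (@subIsetl _ _ _))).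
exact: (ract_eq_mod fiH per (pro _ _ fiI fiH (@subIsetr _ _ _))).
Qed.

Lemma is_sol_per_proact (alpha : G -> Seq R) xi s :
  is_pro xi -> is_sol_per alpha s -> is_sol_per alpha (proact xi s).
Proof.
move=> pro [sol [H [fiH per]]]; rewrite (proact_ract pro fiH per).
by split; [exact: is_sol_ract | exists H; split; last exact: periodic_ract].
Qed.

Lemma proact_pro_eq xi eta s :
  is_pro xi -> is_pro eta -> pro_eq xi eta -> is_periodic s ->
  proact xi s = proact eta s.
Proof.
move=> proxi proeta xi_eta [H [fiH per]].
rewrite (proact_ract proxi fiH per) (proact_ract proeta fiH per).
exact: ract_eq_mod fiH per (xi_eta H fiH).
Qed.

Lemma proact_pro_of g s : is_periodic s -> proact (pro_of g) s = ract s g.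
Proof. by move=> /proact_chosen[H0 [_ _ ->]]. Qed.

Lemma proact_pro_mul xi eta s : is_pro eta -> is_periodic s ->
  proact (pro_mul xi eta) s = proact eta (proact xi s).
Proof.
move=> proeta /proact_chosen[H0 [fiH0 per0 actE]].
rewrite !actE (proact_ract proeta fiH0 (periodic_ract _ fiH0 per0)).
by rewrite ract_ract.
Qed.

Lemma proact_linear xi (a : R[i]) s1 s2 :
  is_pro xi -> is_periodic s1 -> is_periodic s2 ->
  proact xi (fun g t => a * s1 g t + s2 g t) =
  (fun g t => a * proact xi s1 g t + proact xi s2 g t).
Proof.
move=> pro [H1 [fiH1 per1]] [H2 [fiH2 per2]].
have fiI := fi_normalI fiH1 fiH2.
have perI1 := periodicS (@subIsetl _ H1 H2) per1.
have perI2 := periodicS (@subIsetr _ H1 H2) per2.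
have perI : periodic (fun g t => a * s1 g t + s2 g t) (H1 `&` H2).
  by move=> g h Hh; rewrite perI1 // perI2.
by rewrite !(proact_ract pro fiI) //.
Qed.

End ProfiniteAction.

Theorem proposition1p12 (R : realType) (G : groupType)
    (k : set (Seq R)) (alpha : G -> Seq R) :
  sigma_subring_with_constants k ->
  in_Cc k alpha ->
  let phi := fundsol alpha in
  [/\ is_sol_c alpha phi,
      (forall s g, is_sol_c alpha s -> is_sol_c alpha (ract s g)),
      (forall s, is_sol_c alpha s <->
         exists c : G -> R[i],
           finite_set [set g | c g <> 0] /\ s = lincomb phi c)
    & (forall c : G -> R[i], finite_set [set g | c g <> 0] ->
         lincomb phi c = (fun _ _ => 0) -> c = (fun _ => 0))] /\
  (forall s, is_sol alpha s <->
     exists c : G -> R[i], pointwise_finite phi c /\ s = lincomb phi c) /\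
  (forall s, is_sol_per alpha s <->
     exists B : seq (G -> Seq R),
       [/\ in_span B s,
           (forall v, in_span B v -> is_sol_per alpha v)
         & (forall (i : 'I_(size B)) g,
              in_span B (ract (nth (fun _ _ => 0) B i) g))]) /\
  (exists act : (set G -> G) -> (G -> Seq R) -> (G -> Seq R),
     [/\ (forall xi s, is_pro xi -> is_sol_per alpha s ->
            is_sol_per alpha (act xi s)),
         (forall xi s H, is_pro xi -> is_sol_per alpha s ->
            fi_normal H -> periodic s H -> act xi s = ract s (xi H)),
         (forall xi eta s, is_pro xi -> is_pro eta -> pro_eq xi eta ->
            is_sol_per alpha s -> act xi s = act eta s),
         [/\ (forall g s, is_sol_per alpha s -> act (pro_of g) s = ract s g),
             (forall s, is_sol_per alpha s -> act (@pro_one G) s = s) &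
         (forall xi eta s, is_pro xi -> is_pro eta -> is_sol_per alpha s ->
            act (pro_mul xi eta) s = act eta (act xi s))]
       & (forall xi (a : R[i]) s1 s2, is_pro xi ->
            is_sol_per alpha s1 -> is_sol_per alpha s2 ->
            act xi (fun g t => a * s1 g t + s2 g t) =
            (fun g t => a * act xi s1 g t + act xi s2 g t))]).
Proof.
move=> _ [_ finA] phi; rewrite {}/phi.
split; [split|split; [|split]].
- by split=> [|t]; [exact: is_sol_fundsol | exact: finite_supp_fundsol].
- by move=> s g [sol fins]; split=> [|t]; [exact: is_sol_ract | exact: finite_supp_ract].
- move=> s; split=> [[sol fins]|[c [finc ->]]].
    by exists (fun g => s g 0%N); split; [exact: fins | exact: is_solE].
  by split=> [|t]; [exact: is_sol_lincomb | exact: finite_supp_lincomb].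
- by move=> c _ c0; apply/funext => g; rewrite -(lincomb_fundsol0 alpha c g) c0.
- move=> s; split=> [sol|[c [_ ->]]]; last exact: is_sol_lincomb.
  by exists (fun g => s g 0%N); split; [exact: pointwise_finite_fundsol | exact: is_solE].
- by move=> s; exact: is_sol_perP.
exists (@proact R G); split.
- by move=> xi s; exact: is_sol_per_proact.
- by move=> xi s H pro _; exact: proact_ract.
- by move=> xi eta s proxi proeta xi_eta [_ per]; exact: proact_pro_eq.
- split=> [g s [_ per]|s [_ per]|xi eta s _ proeta [_ per]].
  + exact: proact_pro_of.
  + by have := proact_pro_of 1%g per; rewrite ract1.
  + exact: proact_pro_mul.
- by move=> xi a s1 s2 pro [_ per1] [_ per2]; exact: proact_linear.
Qed.
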